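(* Let $1\leq a_1\leq\cdots\leq a_k$, $k\geq 3$, be an arbitrary partition of a natural number $n$. Then $$S(a_1,\dots,a_k)\prec S(\underbrace{1,\dots,1}_{k},n-k),$$ where the right-hand tree has $k$ branches of length $1$ and one branch of length $n-k$.
   Context: $M_k(G)$ denotes the number of closed walks of length $k$ in a graph $G$. For graphs $G,H$, $G\prec H$ means $M_k(G)\leq M_k(H)$ for all $k\geq 0$ with strict inequality for at least one $k$. For positive integers $c_1,\dots,c_m$, the starlike tree $S(c_1,\dots,c_m)$ is obtained from disjoint paths $P_{c_1+1},\dots,P_{c_m+1}$ ($P_r$ the path on $r$ vertices) by identifying one end vertex of each path into a single vertex (the center); the resulting pendant paths from the center are the branches, of lengths $c_1,\dots,c_m$. *)

From mathcomp Require Import all_boot.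
Set Implicit Arguments. Unset Strict Implicit. Unset Printing Implicit Defensive.

Definition closed_walks (V : finType) (e : rel V) (k : nat) : nat :=
  #|[set w : {ffun 'I_k.+1 -> V} |
      (w ord0 == w ord_max) &&
      [forall i : 'I_k, e (w (widen_ord (leqnSn k) i)) (w (lift ord0 i))]]|.

Definition walk_prec (V : finType) (e : rel V) (W : finType) (f : rel W) : Prop :=
  (forall k, closed_walks e k <= closed_walks f k) /\
  (exists k, closed_walks e k < closed_walks f k).

(* Starlike tree S(c_1,...,c_m), c given as a sequence.
   Vertices: None = the center; Some (i, j) = the (j+1)-th vertex of branch i
   counted from the center, j < c_i. *)
Definition star_vert (c : seq nat) : finType :=
  option {i : 'I_(size c) & 'I_(nth 0 c i)}.

Definition star_adj (c : seq nat) : rel (star_vert c) :=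
  fun x y =>
    match x, y with
    | None, None => false
    | None, Some v => val (tagged v) == 0
    | Some u, None => val (tagged u) == 0
    | Some u, Some v =>
        (tag u == tag v) &&
        (((val (tagged u)).+1 == val (tagged v)) ||
         ((val (tagged v)).+1 == val (tagged u)))
    end.

From mathcomp Require Import all_boot zify.
Set Implicit Arguments. Unset Strict Implicit. Unset Printing Implicit Defensive.

(* Write m = n - k and call the branch of length m of T = S(1,...,1,m) its spine.
   For every length we inject the closed walks of S(a) into those of T.
   A closed walk through the center is sent, position by position, to the image
   of the next vertex: a vertex at distance d >= 1 from the center goes to the
   spine vertex at distance d - 1, and the center goes to the leaf indexed by
   the branch just left.  The leaves of the image mark the center visits and name
   the branches, so the walk can be rebuilt backwards from any center visit.
   A closed walk avoiding the center stays in one branch, say the i-th, and is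
   laid on the spine shifted by (a_1 - 1) + ... + (a_(i-1) - 1); these blocks
   overlap only at their endpoints, so the branch is read off from any two
   consecutive positions.  The second kind of image contains no leaf, so the
   two kinds never collide.  For length 4 the injection misses the walk
   leaf-center-spine-center when a_1 = 1, and a bounce at distance a_1 on the
   spine otherwise. *)

Section StarlikeTree.
Variable c : seq nat.
Implicit Types (x y : star_vert c) (i d : nat).

Definition branch x : nat := if x is Some u then tag u else 0.
Definition depth x : nat := if x is Some u then (tagged u).+1 else 0.

(* The vertex at distance d from the center on branch i; the center itself when
   d = 0 or when (i, d) is out of range. *)
Definition star_at i d : star_vert c :=
  if (d, insub i : option 'I_(size c)) is (d'.+1, Some i') then
    omap (existT (fun i : 'I_(size c) => 'I_(nth 0 c i)) i') (insub d')
  else None.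

Lemma star_atK x : star_at (branch x) (depth x) = x.
Proof.
case: x => [[i j]|] //=; rewrite /star_at.
have -> : insub (i : nat) = Some i by exact: valK.
have -> : insub (j : nat) = Some j by exact: valK.
by [].
Qed.

Lemma star_vert_inj x y : branch x = branch y -> depth x = depth y -> x = y.
Proof. by move=> eq_b eq_d; rewrite -(star_atK x) -(star_atK y) eq_b eq_d. Qed.

Lemma depth_star_at i d : i < size c -> d <= nth 0 c i -> depth (star_at i d) = d.
Proof.
case: d => [|d] // lt_i lt_d.
by rewrite /star_at (insubT (fun j => j < size c) lt_i) /= (insubT (fun j => j < nth 0 c i) lt_d).
Qed.

Lemma branch_star_at i d : star_at i d != None -> branch (star_at i d) = i.
Proof.
by rewrite /star_at; case: d => // d; case: insubP => // i' _ <-; case: insubP.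
Qed.

Lemma depth_eq0 x : (depth x == 0) = (x == None).
Proof. by case: x. Qed.

Lemma branch_lt x : x != None -> branch x < size c.
Proof. by case: x => [[i j] _|] //; apply: ltn_ord. Qed.

Lemma depth_le x : depth x <= nth 0 c (branch x).
Proof. by case: x => [[i j]|] //; apply: ltn_ord. Qed.

Lemma star_adjE x y :
  star_adj x y =
    (((depth x).+1 == depth y) || ((depth y).+1 == depth x)) &&
    [|| x == None, y == None | branch x == branch y].
Proof.
case: x => [u|]; case: y => [v|] //=; rewrite ?eqSS ?orbF ?orbT ?andbT //.
by rewrite andbC.
Qed.

Lemma star_adj_sym x y : star_adj x y = star_adj y x.
Proof.
rewrite !star_adjE orbC [branch x == _]eq_sym.
by case: (x == None); case: (y == None).
Qed.

Lemma star_adj_depth x y :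
  star_adj x y -> ((depth x).+1 == depth y) || ((depth y).+1 == depth x).
Proof. by rewrite star_adjE => /andP []. Qed.

Lemma star_adj_branch x y :
  star_adj x y -> x != None -> y != None -> branch x = branch y.
Proof. by rewrite star_adjE => /andP [_] /or3P [/eqP->|/eqP->|/eqP]. Qed.

Lemma star_adj_neq x y : star_adj x y -> x != y.
Proof. by move=> /star_adj_depth; apply: contraTneq => ->; apply/negP; lia. Qed.

Lemma card_star_vert : #|star_vert c| = (sumn c).+1.
Proof.
rewrite card_option card_tagged sumnE big_map big_enum /= [sumn c]sumnE (big_nth 0) big_mkord.
by congr _.+1; apply: eq_bigr => i _; rewrite card_ord.
Qed.

End StarlikeTree.

Lemma ordS_inord N s : s <= N -> ordS (inord s : 'I_N.+1) = inord (s.+1 %% N.+1).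
Proof. by move=> le_sN; apply: val_inj; rewrite /= !inordK ?ltn_pmod. Qed.

Lemma cyclic_ind N (P : 'I_N -> Prop) t :
  P t -> (forall i, P (ordS i) -> P i) -> forall i, P i.
Proof.
move=> Pt IH i.
suff P_dist d : forall j : 'I_N, j + d = t %[mod N] -> P j.
  apply: (P_dist (t + N - i)); rewrite addnC subnK ?modnDr //.
  by have := ltn_ord i; lia.
elim: d => [|d IHd] j.
  by rewrite addn0 !modn_small // => /val_inj ->.
by move=> jd_t; apply/IH/IHd; rewrite /= modnDml addSnnS.
Qed.

Section CyclicWalks.
Variables (V : finType) (e : rel V).

Definition cycle_walks N : {set {ffun 'I_N -> V}} :=
  [set w : {ffun 'I_N -> V} | [forall i, e (w i) (w (ordS i))]].

Lemma walk_adj N w : w \in cycle_walks N -> forall i, e (w i) (w (ordS i)).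
Proof. by rewrite inE => /forallP. Qed.

Lemma walk_adj_inord N w s : w \in cycle_walks N.+1 -> s <= N ->
  e (w (inord s)) (w (inord (s.+1 %% N.+1))).
Proof. by move=> Ww le_sN; rewrite -ordS_inord //; apply: (walk_adj Ww). Qed.

Lemma closed_walks0 : closed_walks e 0 = #|V|.
Proof.
rewrite /closed_walks (_ : [set w | _] = setT) ?cardsT ?card_ffun ?card_ord ?expn1 //.
have -> : ord_max = ord0 :> 'I_1 by apply: val_inj.
by apply/setP => w; rewrite !inE eqxx; apply/forallP => -[].
Qed.

Lemma closed_walksS N : closed_walks e N.+1 = #|cycle_walks N.+1|.
Proof.
rewrite /closed_walks; set C := [set w | _].
pose restrict (w : {ffun 'I_N.+2 -> V}) : {ffun 'I_N.+1 -> V} :=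
  [ffun i => w (widen_ord (leqnSn _) i)].
have last_step w i : w \in C -> w (widen_ord (leqnSn _) (ordS i)) = w (lift ord0 i).
  rewrite inE => /andP [/eqP w0 _]; case: (ltnP i.+1 N.+1) => lt_iN.
    by congr (w _); apply: val_inj; rewrite /= modn_small.
  have iN : i.+1 = N.+1 by have := ltn_ord i; lia.
  rewrite (_ : widen_ord _ _ = ord0); last by apply: val_inj; rewrite /= iN modnn.
  by rewrite w0; congr (w _); apply: val_inj; rewrite /= /bump add1n iN.
rewrite -(@card_in_imset _ _ restrict C).
  apply: eq_card => v; apply/imsetP/idP => [[w Cw ->]|].
    rewrite inE; apply/forallP => i; rewrite !ffunE last_step //.
    by move: Cw; rewrite inE => /andP [_ /forallP].
  rewrite inE => /forallP v_walk; exists [ffun t : 'I_N.+2 => v (inord (t %% N.+1))].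
    rewrite inE !ffunE /= modnn mod0n eqxx; apply/forallP => i /=.
    rewrite !ffunE /= /bump add1n (modn_small (ltn_ord i)) inord_val.
    have le_iN : i <= N by rewrite -ltnS.
    by rewrite -(ordS_inord le_iN) inord_val.
  by apply/esym/ffunP => i; rewrite /restrict !ffunE /= modn_small ?inord_val.
move=> w w' Cw Cw' eq_r.
have eq_w j : w (widen_ord (leqnSn _) j) = w' (widen_ord (leqnSn _) j).
  by have := congr1 (fun f : {ffun 'I_N.+1 -> V} => f j) eq_r; rewrite !ffunE.
apply/ffunP => t; case: (unliftP ord_max t) => [j ->|->].
  by rewrite (_ : lift _ j = widen_ord (leqnSn _) j) ?eq_w //; apply/val_inj/lift_max.
move: Cw Cw' (eq_w ord0); rewrite !inE => /andP [/eqP <- _] /andP [/eqP <- _].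
by rewrite (_ : widen_ord _ ord0 = ord0) //; apply: val_inj.
Qed.

Definition cycle4 (z0 z1 z2 z3 : V) : {ffun 'I_4 -> V} :=
  [ffun i : 'I_4 => nth z0 [:: z0; z1; z2; z3] i].

Lemma cycle4E z0 z1 z2 z3 i : cycle4 z0 z1 z2 z3 i = nth z0 [:: z0; z1; z2; z3] i.
Proof. exact: ffunE. Qed.

Lemma cycle4_walk z0 z1 z2 z3 :
  e z0 z1 -> e z1 z2 -> e z2 z3 -> e z3 z0 -> cycle4 z0 z1 z2 z3 \in cycle_walks 4.
Proof.
by move=> e01 e12 e23 e30; rewrite inE; apply/forallP => -[[|[|[|[|//]]]] ?]; rewrite !ffunE.
Qed.

End CyclicWalks.

Section Transfer.
Variables (a : seq nat) (n : nat).
Hypothesis a_pos : all (fun x => 0 < x) a.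
Hypothesis sum_a : \sum_(x <- a) x = n.

Local Notation k := (size a).
Local Notation m := (n - size a).
Local Notation b := (nseq (size a) 1 ++ [:: n - size a]).
Implicit Types (x y z : star_vert a).

Lemma size_b : size b = k.+1.
Proof. by rewrite size_cat size_nseq addn1. Qed.

Lemma nth_b_leaf i : i < k -> nth 0 b i = 1.
Proof. by move=> lt_ik; rewrite nth_cat size_nseq lt_ik nth_nseq lt_ik. Qed.

Lemma nth_b_spine : nth 0 b k = m.
Proof. by rewrite nth_cat size_nseq ltnn subnn. Qed.

Definition offset i := \sum_(j < i) (nth 0 a j).-1.

Lemma offsetS i : offset i.+1 = offset i + (nth 0 a i).-1.
Proof. exact: big_ord_recr. Qed.

Lemma offset0 : offset 0 = 0.
Proof. exact: big_ord0. Qed.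

Lemma offset_homo : {homo offset : i j / i <= j}.
Proof. by apply: homo_leq leqnn leq_trans _ => i; rewrite offsetS leq_addr. Qed.

Lemma offset_size : offset k + k = n.
Proof.
rewrite -sum_a (big_nth 0) big_mkord -[k in _ + k]card_ord -sum1_card -big_split.
by apply: eq_bigr => j _ /=; rewrite addn1 prednK //; apply: (all_nthP 0 a_pos).
Qed.

Lemma offset_block_unique i i' p :
  offset i <= p < offset i.+1 -> offset i' <= p < offset i'.+1 -> i = i'.
Proof.
move=> /andP [lo hi] /andP [lo' hi'].
by case: (ltngtP i i') => // lt; have := offset_homo lt; lia.
Qed.

Definition spine d : star_vert b := star_at b k d.
Definition leaf i : star_vert b := star_at b i 1.
Definition is_leaf (z : star_vert b) := (depth z == 1) && (branch z < k).

Lemma depth_spine d : d <= m -> depth (spine d) = d.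
Proof. by move=> le_dm; rewrite depth_star_at ?size_b ?nth_b_spine. Qed.

Lemma depth_leaf i : i < k -> depth (leaf i) = 1.
Proof. by move=> lt_ik; rewrite depth_star_at ?nth_b_leaf // size_b ltnS ltnW. Qed.

Lemma branch_leaf i : i < k -> branch (leaf i) = i.
Proof. by move=> lt_ik; rewrite branch_star_at // -depth_eq0 depth_leaf. Qed.

Lemma is_leaf_spine d : is_leaf (spine d) = false.
Proof.
rewrite /is_leaf; case: (eqVneq (spine d) None) => [->|ne] //.
by rewrite branch_star_at // ltnn andbF.
Qed.

Lemma is_leaf_leaf i : i < k -> is_leaf (leaf i).
Proof. by move=> lt_ik; rewrite /is_leaf depth_leaf // branch_leaf // eqxx. Qed.

Lemma spine_adj d d' :
  d <= m -> d' <= m -> (d.+1 == d') || (d'.+1 == d) -> star_adj (spine d) (spine d').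
Proof.
move=> le_dm le_d'm dd'; rewrite star_adjE !depth_spine // dd' /=.
by case: eqVneq => //= ne; case: eqVneq => //= ne'; rewrite !branch_star_at.
Qed.

Lemma leaf_adj i : i < k -> star_adj (leaf i) None.
Proof. by move=> lt_ik; rewrite star_adjE depth_leaf //= orbT. Qed.

Definition fold_pos (x : star_vert a) := offset (branch x) + (depth x).-1.

Lemma fold_pos_le x : fold_pos x <= m.
Proof.
case: (eqVneq x None) => [-> |nx]; first by rewrite /fold_pos offset0.
have := offset_homo (branch_lt nx); rewrite offsetS.
by have := depth_le x; have := offset_size; rewrite /fold_pos; lia.
Qed.

Lemma depth_pred_le x : (depth x).-1 <= m.
Proof. exact: leq_trans (leq_addl _ _) (fold_pos_le x). Qed.

Lemma fold_pos_block x y : x != None -> y != None -> star_adj x y ->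
  offset (branch x) <= minn (fold_pos x) (fold_pos y) < offset (branch x).+1.
Proof.
move=> nx ny xy; rewrite offsetS /fold_pos -(star_adj_branch xy nx ny).
have := depth_le x; have := depth_le y; have := star_adj_depth xy.
by rewrite -(star_adj_branch xy nx ny); move: nx ny; rewrite -!depth_eq0; lia.
Qed.

Definition slide (x y : star_vert a) : star_vert b :=
  if y == None then leaf (branch x) else spine (depth y).-1.
Definition fold (x : star_vert a) : star_vert b := spine (fold_pos x).
Definition slide_depth (z : star_vert b) : nat := if is_leaf z then 0 else (depth z).+1.

Lemma slide_depthK x y : star_adj x y -> slide_depth (slide x y) = depth y.
Proof.
rewrite /slide /slide_depth; case: eqVneq => [-> /star_adj_neq nx|ny _].
  by rewrite is_leaf_leaf // branch_lt.
by rewrite is_leaf_spine depth_spine ?depth_pred_le // prednK // lt0n depth_eq0.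
Qed.

Lemma is_leaf_slide x y : star_adj x y -> is_leaf (slide x y) = (y == None).
Proof.
rewrite /slide; case: eqVneq => [-> /star_adj_neq nx|_ _]; last exact: is_leaf_spine.
by rewrite is_leaf_leaf // branch_lt.
Qed.

Lemma slide_adj x y z :
  star_adj x y -> star_adj y z -> star_adj (slide x y) (slide y z).
Proof.
move=> xy yz; rewrite /slide.
case: (eqVneq y None) => [y0|ny]; case: (eqVneq z None) => [z0|nz].
- by move: yz; rewrite y0 z0.
- have /eqP -> : (depth z).-1 == 0 by move: yz; rewrite y0 star_adjE /=; lia.
  by apply/leaf_adj/branch_lt; rewrite -y0; apply: star_adj_neq.
- have /eqP -> : (depth y).-1 == 0 by move: yz; rewrite z0 star_adjE /=; lia.
  by rewrite star_adj_sym; apply/leaf_adj/branch_lt.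
- apply: spine_adj; rewrite ?depth_pred_le //.
  have := star_adj_depth yz; move: ny nz; rewrite -!depth_eq0; lia.
Qed.

Lemma fold_adj x y :
  x != None -> y != None -> star_adj x y -> star_adj (fold x) (fold y).
Proof.
move=> nx ny xy; apply: spine_adj; rewrite ?fold_pos_le // /fold_pos.
rewrite (star_adj_branch xy nx ny); have := star_adj_depth xy.
by move: nx ny; rewrite -!depth_eq0; lia.
Qed.

Lemma slide_inj x x' y : depth x = depth x' ->
  star_adj x y -> star_adj x' y -> slide x y = slide x' y -> x = x'.
Proof.
move=> eq_d xy x'y eq_s; apply: (star_vert_inj _ eq_d).
case: (eqVneq x None) => [x0|nx].
  by move: eq_d; rewrite x0 => /esym/eqP; rewrite depth_eq0 => /eqP ->.
have nx' : x' != None by rewrite -depth_eq0 -eq_d depth_eq0.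
case: (eqVneq y None) => [y0|ny].
  by move: eq_s; rewrite /slide y0 eqxx => /(congr1 (@branch _)); rewrite !branch_leaf ?branch_lt.
by rewrite (star_adj_branch xy) ?(star_adj_branch x'y).
Qed.

Lemma fold_inj x y x' y' :
  x != None -> y != None -> x' != None -> y' != None ->
  star_adj x y -> star_adj x' y' -> fold x = fold x' -> fold y = fold y' -> x = x'.
Proof.
move=> nx ny nx' ny' xy x'y'.
have fold_posK (u v : star_vert a) : fold u = fold v -> fold_pos u = fold_pos v.
  by move/(congr1 (@depth _)); rewrite !depth_spine ?fold_pos_le.
move=> /fold_posK eq_x /fold_posK eq_y.
have eq_b : branch x = branch x'.
  apply: offset_block_unique (fold_pos_block nx ny xy) _.
  by rewrite eq_x eq_y; apply: fold_pos_block.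
apply: (star_vert_inj eq_b); move: eq_x nx nx'; rewrite /fold_pos eq_b -!depth_eq0.
lia.
Qed.

Definition transfer N (w : {ffun 'I_N -> star_vert a}) : {ffun 'I_N -> star_vert b} :=
  if [exists i, w i == None] then [ffun i => slide (w i) (w (ordS i))]
  else [ffun i => fold (w i)].

Lemma transfer_walk N (w : {ffun 'I_N -> star_vert a}) :
  w \in cycle_walks (@star_adj a) N -> transfer w \in cycle_walks (@star_adj b) N.
Proof.
move=> Ww; rewrite /transfer inE; case: ifP => [_|/existsPn nc]; apply/forallP => i.
  by rewrite !ffunE; apply: slide_adj; apply: (walk_adj Ww).
by rewrite !ffunE; apply: fold_adj (nc _) (nc _) (walk_adj Ww _).
Qed.

Lemma transfer_has_leaf N (w : {ffun 'I_N -> star_vert a}) :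
  w \in cycle_walks (@star_adj a) N ->
  [exists i, is_leaf (transfer w i)] = [exists i, w i == None].
Proof.
move=> Ww; rewrite /transfer; case: ifP => [/existsP [t /eqP wt]|_].
  apply/existsP; exists (ord_pred t); rewrite ffunE is_leaf_slide; last exact: (walk_adj Ww).
  by rewrite ord_predK wt.
by apply/existsPn => i; rewrite ffunE is_leaf_spine.
Qed.

Lemma transfer_inj N : {in cycle_walks (@star_adj a) N &, injective (@transfer N)}.
Proof.
move=> w w' Ww Ww' eq_t.
have := congr1 (fun u : {ffun 'I_N -> star_vert b} => [exists i, is_leaf (u i)]) eq_t.
rewrite /= !transfer_has_leaf // => eq_c.
have eq_ti i : transfer w i = transfer w' i by rewrite eq_t.
move: eq_ti; rewrite /transfer -eq_c.
case: ifP => [/existsP [t /eqP wt]|/existsPn nc] eq_ti; apply/ffunP.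
  have eq_s i : slide (w i) (w (ordS i)) = slide (w' i) (w' (ordS i)).
    by have := eq_ti i; rewrite !ffunE.
  have eq_d i : depth (w i) = depth (w' i).
    rewrite -(ord_predK i) -(slide_depthK (walk_adj Ww _)).
    by rewrite -(slide_depthK (walk_adj Ww' _)) eq_s.
  apply: (cyclic_ind (t := t)) => [|i eq_next].
    by rewrite wt; apply/esym/eqP; rewrite -depth_eq0 -eq_d wt.
  apply: slide_inj (eq_d i) (walk_adj Ww i) _ _; first by rewrite eq_next; apply: (walk_adj Ww').
  by rewrite [in RHS]eq_next eq_s.
have /existsPn nc' : ~~ [exists i, w' i == None] by rewrite -eq_c; apply/existsPn.
move=> i; have := eq_ti (ordS i); have := eq_ti i; rewrite !ffunE.
exact: fold_inj (nc _) (nc _) (nc' _) (nc' _) (walk_adj Ww _) (walk_adj Ww' _).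
Qed.

Lemma transfer_sub N :
  @transfer N @: cycle_walks (@star_adj a) N \subset cycle_walks (@star_adj b) N.
Proof. by apply/subsetP => _ /imsetP [w Ww ->]; apply: transfer_walk. Qed.

Lemma closed_walks_le L : closed_walks (@star_adj a) L <= closed_walks (@star_adj b) L.
Proof.
case: L => [|N].
  by rewrite !closed_walks0 !card_star_vert sumn_cat sumn_nseq sumnE sum_a /= -offset_size; lia.
by rewrite !closed_walksS -(card_in_imset (@transfer_inj _)) subset_leq_card ?transfer_sub.
Qed.

Hypothesis a_sorted : sorted leq a.
Hypothesis size_a_gt1 : 1 < size a.
Hypothesis size_a_lt : size a < n.

Local Notation a0 := (nth 0 a 0).

Lemma offset1 : offset 1 = a0.-1.
Proof. by rewrite offsetS offset0. Qed.

Lemma a0_le_m : 1 < a0 -> a0 <= m.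
Proof.
have := offset_homo size_a_gt1; rewrite offsetS offset1.
have : a0 <= nth 0 a 1 by move/(sortedP 0): a_sorted => /(_ 0 size_a_gt1).
by have := offset_size; lia.
Qed.

Definition spine_bounce : {ffun 'I_4 -> star_vert b} :=
  cycle4 (spine (a0 - 2)) (spine a0.-1) (spine a0) (spine a0.-1).

Definition leaf_bounce : {ffun 'I_4 -> star_vert b} :=
  cycle4 (leaf 0) None (spine 1) None.

Lemma spine_bounce_walk : 1 < a0 -> spine_bounce \in cycle_walks (@star_adj b) 4.
Proof.
move=> a0_gt1; have le_a0m := a0_le_m a0_gt1.
by apply: cycle4_walk; apply: spine_adj; lia.
Qed.

Lemma leaf_bounce_walk : leaf_bounce \in cycle_walks (@star_adj b) 4.
Proof.
have lt_0k : 0 < k by lia.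
have spine01 : star_adj (spine 0) (spine 1) by apply: spine_adj; lia.
apply: cycle4_walk; first exact: leaf_adj.
- exact: spine01.
- by rewrite star_adj_sym.
- by rewrite star_adj_sym leaf_adj.
Qed.

Lemma spine_bounce_not_transfer w : 1 < a0 ->
  w \in cycle_walks (@star_adj a) 4 -> transfer w != spine_bounce.
Proof.
move=> a0_gt1 Ww; apply/eqP => eq_t; have le_a0m := a0_le_m a0_gt1.
have nc : ~~ [exists i, w i == None].
  rewrite -transfer_has_leaf // eq_t; apply/existsPn => -[[|[|[|[|//]]]] ?];
  by rewrite /spine_bounce cycle4E /= is_leaf_spine.
have fold_at s : depth (fold (w (inord s))) = depth (spine_bounce (inord s)).
  by rewrite -eq_t /transfer (negbTE nc) ffunE.
have pos0 : fold_pos (w (inord 0)) = a0 - 2.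
  by have := fold_at 0; rewrite cycle4E inordK //= !depth_spine ?fold_pos_le //; lia.
have pos2 : fold_pos (w (inord 2)) = a0.
  by have := fold_at 2; rewrite cycle4E inordK //= !depth_spine ?fold_pos_le.
move/existsPn: nc => nc.
have a01 : star_adj (w (inord 0)) (w (inord 1)) := walk_adj_inord Ww (isT : 0 <= 3).
have a12 : star_adj (w (inord 1)) (w (inord 2)) := walk_adj_inord Ww (isT : 1 <= 3).
have := depth_le (w (inord 2)); move: pos0 pos2.
rewrite /fold_pos (star_adj_branch a01) ?(star_adj_branch a12) ?nc //.
case: (posnP (branch (w (inord 2)))) => [-> |b_gt0]; first by rewrite offset0; lia.
by have := offset_homo b_gt0; rewrite offset1; lia.
Qed.

Lemma leaf_bounce_not_transfer w : a0 = 1 ->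
  w \in cycle_walks (@star_adj a) 4 -> transfer w != leaf_bounce.
Proof.
move=> a0_1 Ww; apply/eqP => eq_t; have lt_0k : 0 < k by lia.
have hc : [exists i, w i == None].
  rewrite -transfer_has_leaf // eq_t; apply/existsP; exists ord0.
  by rewrite /leaf_bounce cycle4E is_leaf_leaf.
have slide_at s : s <= 3 ->
    slide (w (inord s)) (w (inord (s.+1 %% 4))) = leaf_bounce (inord s).
  by move=> le_s3; rewrite -eq_t /transfer hc ffunE ordS_inord.
have depth_at s : s <= 3 ->
    depth (w (inord (s.+1 %% 4))) = slide_depth (leaf_bounce (inord s)).
  by move=> le_s3; rewrite -slide_at // slide_depthK //; apply: walk_adj_inord.
have d3 : depth (w (inord 3)) = 2.
  by rewrite (depth_at 2) // cycle4E inordK //= /slide_depth is_leaf_spine depth_spine //; lia.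
have d0 : depth (w (inord 0)) = 1 by rewrite (depth_at 3) // cycle4E inordK.
have w1 : w (inord 1) = None.
  by apply/eqP; rewrite -depth_eq0 (depth_at 0) // cycle4E inordK // /slide_depth is_leaf_leaf.
have n0 : w (inord 0) != None by rewrite -depth_eq0 d0.
have b0 : branch (w (inord 0)) = 0.
  have := slide_at 0 isT; rewrite cycle4E inordK // /slide.
  rewrite (_ : w (inord (1 %% 4)) = None) // eqxx /=.
  by move/(congr1 (@branch _)); rewrite !branch_leaf ?branch_lt.
have a30 : star_adj (w (inord 3)) (w (inord 0)) := walk_adj_inord Ww (isT : 3 <= 3).
have := depth_le (w (inord 3)).
by rewrite (star_adj_branch a30) ?b0 ?d3 ?a0_1 // -depth_eq0 d3.
Qed.

Lemma closed_walks4_lt : closed_walks (@star_adj a) 4 < closed_walks (@star_adj b) 4.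
Proof.
rewrite !closed_walksS -(card_in_imset (@transfer_inj _)).
apply/proper_card/properP; split; first exact: transfer_sub.
have a0_gt0 : 0 < a0 by apply: (all_nthP 0 a_pos); lia.
case: (ltnP 1 a0) => [a0_gt1|a0_le1].
  exists spine_bounce; first exact: spine_bounce_walk.
  by apply/imsetP => -[w Ww /esym/eqP]; apply/negP/spine_bounce_not_transfer.
exists leaf_bounce; first exact: leaf_bounce_walk.
by apply/imsetP => -[w Ww /esym/eqP]; apply/negP/leaf_bounce_not_transfer => //; lia.
Qed.

End Transfer.

Theorem proposition2 (n k : nat) (a : seq nat) :
  3 <= k -> size a = k -> all (fun x => 0 < x) a -> sorted leq a ->
  \sum_(x <- a) x = n -> k < n ->
  walk_prec (@star_adj a) (@star_adj (nseq k 1 ++ [:: n - k])).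
Proof.
move=> k_ge3 size_a a_pos a_sorted sum_a lt_kn; subst k.
split; first exact: closed_walks_le.
by exists 4; apply: closed_walks4_lt => //; lia.
Qed.
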